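(* Let $\kappa<0$ and for $\Delta\in\mathbb R$ and $\sigma^*\ge0$ define \[ \hat E(\Delta,\sigma^* )=-\frac1\kappa\ln\left(e^{\kappa\sigma^*}+e^{-\kappa\Delta}\left(1-e^{\kappa\sigma^*}\right)\right). \] Suppose $\sigma^*>0$ is fixed. Then: (1) $\hat E(0,\sigma^* )=0$ and $|\hat E(\Delta,\sigma^* )|$ is increasing in $|\Delta|$ (i.e. increasing in $\Delta$ on $[0,\infty)$ and decreasing in $\Delta$ on $(-\infty,0]$); (2) if $\Delta>0$, then $\hat E(\Delta,\sigma^* )>0$ and \[ 0<|\Delta|\left(1-e^{\kappa\sigma^*}\right)<|\hat E(\Delta,\sigma^* )|<|\Delta|; \] (3) if $\Delta<0$, then $\hat E(\Delta,\sigma^* )<0$ and \[ 0<|\hat E(\Delta,\sigma^* )|<\min\left\{|\Delta|\left(1-e^{\kappa\sigma^*}\right),\ \sigma^*\right\}. \] Suppose instead $\Delta\in\mathbb R$ is fixed. Then: (4) $\hat E(\Delta,0)=0$ and $|\hat E(\Delta,\sigma^* )|$ is increasing in $\sigma^*\ge0$.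
   Context: In the paper's penalized Kolm–Pollak facility location model, $\Delta=\hat{\mathcal K}-\mathcal K^*$ is the signed error of the parameter $\hat{\mathcal K}$ approximating the optimal unpenalized Kolm–Pollak score $\mathcal K^*$, $\sigma^*\ge0$ is the intended penalty of the optimal solution, and $\hat E(\Delta,\sigma^* )$ equals $\hat\sigma-\sigma^*$, the error in the penalty applied; so $\Delta>0$ corresponds to over-penalizing ($\hat\sigma>\sigma^*$) and $\Delta<0$ to under-penalizing ($\hat\sigma<\sigma^*$). *)

From Stdlib Require Import Reals.
Open Scope R_scope.

Definition Ehat (kappa Delta sigma : R) : R :=
  - (1 / kappa) * ln (exp (kappa * sigma) + exp (- kappa * Delta) * (1 - exp (kappa * sigma))).

From Stdlib Require Import Reals Lra.
Open Scope R_scope.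

(* With a = exp (kappa sigma) in (0, 1) and c = -kappa > 0 one has
   c Ehat = ln (a + (1 - a) exp (c Delta)), the logarithm of a convex
   combination of 1 and exp (c Delta).  Signs and monotonicity in Delta and
   in sigma follow from the position of this combination relative to 1.
   Strict convexity of exp puts the combination above exp ((1 - a) c Delta),
   which gives (1 - a) Delta < Ehat; it also lies above a, giving
   -sigma < Ehat, and below exp (c Delta) when Delta > 0, giving Ehat < Delta. *)

Lemma exp_tangent_lt m x : x <> m -> exp m * (1 + (x - m)) < exp x.
Proof.
  intros hxm.
  replace (exp x) with (exp m * exp (x - m)) by (rewrite <- exp_plus; f_equal; ring).
  apply Rmult_lt_compat_l; [apply exp_pos | apply exp_ineq1; lra].
Qed.

Lemma exp_convex_lt a x y : 0 < a < 1 -> x <> y ->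
  exp (a * x + (1 - a) * y) < a * exp x + (1 - a) * exp y.
Proof.
  intros ha hxy. set (m := a * x + (1 - a) * y).
  assert (hx : exp m * (1 + (x - m)) < exp x).
  { apply exp_tangent_lt; unfold m; intro h.
    assert (h0 : (1 - a) * (x - y) = 0) by lra.
    apply Rmult_integral in h0; lra. }
  assert (hy : exp m * (1 + (y - m)) < exp y).
  { apply exp_tangent_lt; unfold m; intro h.
    assert (h0 : a * (y - x) = 0) by lra.
    apply Rmult_integral in h0; lra. }
  assert (hmix : a * (exp m * (1 + (x - m))) + (1 - a) * (exp m * (1 + (y - m))) = exp m)
    by (unfold m; ring).
  rewrite <- hmix at 1.
  apply Rplus_lt_compat; apply Rmult_lt_compat_l; lra.
Qed.

Lemma ln_nonneg x : 1 <= x -> 0 <= ln x.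
Proof.
  intros hx; rewrite <- ln_1.
  destruct (Rle_lt_or_eq_dec 1 x hx) as [hlt | <-]; [left; apply ln_increasing | ]; lra.
Qed.

Lemma ln_nonpos x : 0 < x <= 1 -> ln x <= 0.
Proof.
  intros hx; rewrite <- ln_1.
  destruct (Rle_lt_or_eq_dec x 1 (proj2 hx)) as [hlt | ->]; [left; apply ln_increasing | ]; lra.
Qed.

Lemma Rabs_ln_lt_ge1 x y : 1 <= x -> x < y -> Rabs (ln x) < Rabs (ln y).
Proof.
  intros hx hxy.
  assert (hlx := ln_nonneg x hx).
  assert (hln := ln_increasing x y ltac:(lra) hxy).
  rewrite !Rabs_pos_eq; lra.
Qed.

Lemma Rabs_ln_lt_le1 x y : 0 < y -> y < x -> x <= 1 -> Rabs (ln x) < Rabs (ln y).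
Proof.
  intros hy hyx hx.
  assert (hlx := ln_nonpos x ltac:(lra)).
  assert (hln := ln_increasing y x hy hyx).
  rewrite !Rabs_left1; lra.
Qed.

Lemma Rabs_lt_increasing_nonneg (f : R -> R) :
  f 0 = 0 -> (forall x y, x < y -> f x < f y) ->
  forall x y, 0 <= x -> x < y -> Rabs (f x) < Rabs (f y).
Proof.
  intros f0 hf x y hx hxy.
  assert (hfx : 0 <= f x).
  { destruct (Rle_lt_or_eq_dec 0 x hx) as [hlt | <-]; [rewrite <- f0; left; apply hf | ]; lra. }
  assert (hfxy := hf x y hxy).
  rewrite !Rabs_pos_eq; lra.
Qed.

Lemma Rabs_lt_increasing_nonpos (f : R -> R) :
  f 0 = 0 -> (forall x y, x < y -> f x < f y) ->
  forall x y, x < y -> y <= 0 -> Rabs (f y) < Rabs (f x).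
Proof.
  intros f0 hf x y hxy hy.
  assert (hfy : f y <= 0).
  { destruct (Rle_lt_or_eq_dec y 0 hy) as [hlt | ->]; [rewrite <- f0; left; apply hf | ]; lra. }
  assert (hfxy := hf x y hxy).
  rewrite !Rabs_left1; lra.
Qed.

Definition log_mix (a u : R) : R := ln (a + (1 - a) * exp u).

Lemma log_mix_0_r a : log_mix a 0 = 0.
Proof. unfold log_mix; rewrite exp_0, <- ln_1; f_equal; ring. Qed.

Lemma log_mix_lt_mono a u v : 0 <= a < 1 -> u < v -> log_mix a u < log_mix a v.
Proof.
  intros ha huv; unfold log_mix.
  assert (hexp := exp_increasing u v huv).
  assert (hu := exp_pos u).
  apply ln_increasing; nra.
Qed.

Lemma log_mix_gt_linear a u : 0 < a < 1 -> u <> 0 -> (1 - a) * u < log_mix a u.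
Proof.
  intros ha hu; unfold log_mix.
  rewrite <- (ln_exp ((1 - a) * u)).
  apply ln_increasing; [apply exp_pos | ].
  assert (hconv := exp_convex_lt a 0 u ha (not_eq_sym hu)).
  rewrite Rmult_0_r, Rplus_0_l, exp_0, Rmult_1_r in hconv.
  exact hconv.
Qed.

Lemma log_mix_lt_id a u : 0 < a <= 1 -> 0 < u -> log_mix a u < u.
Proof.
  intros ha hu; unfold log_mix.
  rewrite <- (ln_exp u) at 2.
  assert (hexp : 1 < exp u) by (rewrite <- exp_0; apply exp_increasing; lra).
  apply ln_increasing; nra.
Qed.

Lemma log_mix_gt_ln a u : 0 < a < 1 -> ln a < log_mix a u.
Proof.
  intros ha; unfold log_mix.
  assert (hu := exp_pos u).
  apply ln_increasing; nra.
Qed.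

Lemma Rabs_log_mix_lt a b u : 0 < a -> a < b -> b <= 1 -> u <> 0 ->
  Rabs (log_mix b u) < Rabs (log_mix a u).
Proof.
  intros ha hab hb hu; unfold log_mix.
  destruct (Rlt_or_le 0 u) as [hpos | hneg].
  - assert (hexp : 1 < exp u) by (rewrite <- exp_0; apply exp_increasing; lra).
    apply Rabs_ln_lt_ge1; nra.
  - assert (hexp : exp u < 1) by (rewrite <- exp_0; apply exp_increasing; lra).
    assert (hu0 := exp_pos u).
    apply Rabs_ln_lt_le1; nra.
Qed.

Lemma Ehat_0_r kappa D : Ehat kappa D 0 = 0.
Proof. unfold Ehat; rewrite Rmult_0_r, exp_0, Rminus_diag, Rmult_0_r, Rplus_0_r, ln_1; ring. Qed.

Section Ehat_properties.

Variable kappa : R.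
Hypothesis hk : kappa < 0.

Lemma Ehat_scaled D s : - kappa * Ehat kappa D s = log_mix (exp (kappa * s)) (- kappa * D).
Proof. unfold Ehat, log_mix; rewrite (Rmult_comm (exp _)); field; lra. Qed.

Lemma exp_kappa_lt_1 s : 0 < s -> exp (kappa * s) < 1.
Proof. intros hs; rewrite <- exp_0; apply exp_increasing; nra. Qed.

Lemma exp_kappa_le_1 s : 0 <= s -> exp (kappa * s) <= 1.
Proof.
  intros hs; destruct (Rle_lt_or_eq_dec 0 s hs) as [hlt | <-].
  - left; apply exp_kappa_lt_1, hlt.
  - rewrite Rmult_0_r, exp_0; lra.
Qed.

Lemma Ehat_0_l s : Ehat kappa 0 s = 0.
Proof.
  apply (Rmult_eq_reg_l (- kappa)); [ | lra].
  rewrite Ehat_scaled, !Rmult_0_r; apply log_mix_0_r.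
Qed.

Lemma Ehat_lt_mono s : 0 < s -> forall D1 D2, D1 < D2 -> Ehat kappa D1 s < Ehat kappa D2 s.
Proof.
  intros hs D1 D2 hD.
  apply (Rmult_lt_reg_l (- kappa)); [lra | ].
  rewrite !Ehat_scaled.
  assert (ha := exp_kappa_lt_1 s hs).
  assert (ha0 := exp_pos (kappa * s)).
  apply log_mix_lt_mono; [lra | nra].
Qed.

Lemma Ehat_pos s D : 0 < s -> 0 < D -> 0 < Ehat kappa D s.
Proof. intros hs hD; rewrite <- (Ehat_0_l s); apply Ehat_lt_mono; assumption. Qed.

Lemma Ehat_neg s D : 0 < s -> D < 0 -> Ehat kappa D s < 0.
Proof. intros hs hD; rewrite <- (Ehat_0_l s); apply Ehat_lt_mono; assumption. Qed.

Lemma Ehat_gt_linear s D : 0 < s -> D <> 0 -> (1 - exp (kappa * s)) * D < Ehat kappa D s.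
Proof.
  intros hs hD.
  apply (Rmult_lt_reg_l (- kappa)); [lra | ].
  rewrite Ehat_scaled.
  replace (- kappa * ((1 - exp (kappa * s)) * D))
    with ((1 - exp (kappa * s)) * (- kappa * D)) by ring.
  apply log_mix_gt_linear.
  - split; [apply exp_pos | apply exp_kappa_lt_1, hs].
  - intro h; apply Rmult_integral in h; lra.
Qed.

Lemma Ehat_lt_id s D : 0 <= s -> 0 < D -> Ehat kappa D s < D.
Proof.
  intros hs hD.
  apply (Rmult_lt_reg_l (- kappa)); [lra | ].
  rewrite Ehat_scaled.
  apply log_mix_lt_id; [split; [apply exp_pos | apply exp_kappa_le_1, hs] | nra].
Qed.

Lemma Ehat_gt_opp s D : 0 < s -> - s < Ehat kappa D s.
Proof.
  intros hs.
  apply (Rmult_lt_reg_l (- kappa)); [lra | ].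
  rewrite Ehat_scaled.
  replace (- kappa * - s) with (ln (exp (kappa * s))) by (rewrite ln_exp; ring).
  apply log_mix_gt_ln; split; [apply exp_pos | apply exp_kappa_lt_1, hs].
Qed.

Lemma Rabs_Ehat_lt_mono_r D s1 s2 : D <> 0 -> 0 <= s1 -> s1 < s2 ->
  Rabs (Ehat kappa D s1) < Rabs (Ehat kappa D s2).
Proof.
  intros hD hs1 hs12.
  apply (Rmult_lt_reg_l (- kappa)); [lra | ].
  rewrite <- (Rabs_pos_eq (- kappa)) by lra.
  rewrite <- !Rabs_mult, !Ehat_scaled.
  apply Rabs_log_mix_lt.
  - apply exp_pos.
  - apply exp_increasing; nra.
  - apply exp_kappa_le_1, hs1.
  - intro h; apply Rmult_integral in h; lra.
Qed.

End Ehat_properties.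

Theorem theorem3 (kappa : R) (hk : kappa < 0) :
  (forall sigma : R, 0 < sigma ->
     (* (1) *)
     (Ehat kappa 0 sigma = 0 /\
      (forall d1 d2 : R, 0 <= d1 -> d1 < d2 ->
         Rabs (Ehat kappa d1 sigma) < Rabs (Ehat kappa d2 sigma)) /\
      (forall d1 d2 : R, d1 < d2 -> d2 <= 0 ->
         Rabs (Ehat kappa d2 sigma) < Rabs (Ehat kappa d1 sigma))) /\
     (* (2) *)
     (forall Delta : R, 0 < Delta ->
        0 < Ehat kappa Delta sigma /\
        0 < Rabs Delta * (1 - exp (kappa * sigma)) /\
        Rabs Delta * (1 - exp (kappa * sigma)) < Rabs (Ehat kappa Delta sigma) /\
        Rabs (Ehat kappa Delta sigma) < Rabs Delta) /\
     (* (3) *)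
     (forall Delta : R, Delta < 0 ->
        Ehat kappa Delta sigma < 0 /\
        0 < Rabs (Ehat kappa Delta sigma) /\
        Rabs (Ehat kappa Delta sigma) <
          Rmin (Rabs Delta * (1 - exp (kappa * sigma))) sigma)) /\
  (* (4) *)
  (forall Delta : R,
     Ehat kappa Delta 0 = 0 /\
     (forall s1 s2 : R, 0 <= s1 -> s1 < s2 ->
        Rabs (Ehat kappa Delta s1) <= Rabs (Ehat kappa Delta s2)) /\
     (Delta <> 0 -> forall s1 s2 : R, 0 <= s1 -> s1 < s2 ->
        Rabs (Ehat kappa Delta s1) < Rabs (Ehat kappa Delta s2))).
Proof.
  split.
  - intros s hs.
    assert (ha := exp_kappa_lt_1 kappa hk s hs).
    assert (hmono := Ehat_lt_mono kappa hk s hs).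
    assert (h0 := Ehat_0_l kappa hk s).
    split; [split; [exact h0 | split] | split].
    + exact (Rabs_lt_increasing_nonneg _ h0 hmono).
    + exact (Rabs_lt_increasing_nonpos _ h0 hmono).
    + intros D hD.
      assert (hE := Ehat_pos kappa hk s D hs hD).
      assert (hlow := Ehat_gt_linear kappa hk s D hs ltac:(lra)).
      assert (hup := Ehat_lt_id kappa hk s D ltac:(lra) hD).
      rewrite !Rabs_pos_eq by lra.
      repeat split; nra.
    + intros D hD.
      assert (hE := Ehat_neg kappa hk s D hs hD).
      assert (hlow := Ehat_gt_linear kappa hk s D hs ltac:(lra)).
      assert (hopp := Ehat_gt_opp kappa hk s D hs).
      rewrite !Rabs_left by lra.
      repeat split; try lra.
      apply Rmin_glb_lt; lra.
  - intros D.
    split; [apply Ehat_0_r | split].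
    + intros s1 s2 hs1 hs12.
      destruct (Req_dec D 0) as [-> | hD].
      * rewrite !Ehat_0_l by exact hk; lra.
      * left; apply Rabs_Ehat_lt_mono_r; assumption.
    + intros hD s1 s2; apply Rabs_Ehat_lt_mono_r; assumption.
Qed.
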